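(* Let $R$ be a ring, $\Bbbk$ a field of characteristic $0$, and $M$ a $\mathrm{VIC}(R)$-module over $\Bbbk$ that is polynomial of degree $d$ starting at $m$, with $M(R^n)$ finite-dimensional for all $n$. Then there exists $u\ge0$ such that for all $n\ge u$, every elementary matrix in $\mathrm{GL}_n(R)$ acts on $M(R^n)$ by a unipotent operator.
   Context: A linear map $f\colon V\to V$ is unipotent if $f=\mathrm{id}_V+\phi$ with $\phi$ nilpotent. An elementary matrix differs from the identity in exactly one off-diagonal entry. $\mathrm{VIC}(R)$: objects finite-rank free right $R$-modules, morphisms $(f,C)\colon A_1\to A_2$ with $f$ injective and $A_2=f(A_1)\oplus C$, composition $(f_2,C_2)\circ(f_1,C_1)=(f_2f_1,C_2\oplus f_2(C_1))$; a $\mathrm{VIC}(R)$-module is a functor to $\Bbbk$-vector spaces. $DM(A)=M(A\oplus R)/\mathrm{Im}(M(A)\to M(A\oplus R))$. $M$ is polynomial of degree $-1$ starting at $m$ if $M(A)=0$ for $\mathrm{rk}A\ge m$; of degree $d\ge0$ starting at $m$ if all induced maps $M(A_1)\to M(A_2)$ with $\mathrm{rk}A_1\ge m$ are injective and $DM$ is polynomial of degree $d-1$ starting at $m-1$. *)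

From HB Require Import structures.
From mathcomp Require Import all_boot all_order all_algebra.
Set Implicit Arguments. Unset Strict Implicit. Unset Printing Implicit Defensive.
Import Order.TTheory GRing.Theory Num.Theory.
Local Open Scope ring_scope.

(* Conventions.
   - A finite-rank free right R-module is represented by R^n = 'cV[R]_n
     (column vectors; R acts on the right by v *m r%:M).
   - An R-linear map R^a -> R^b is a matrix f : 'M[R]_(b,a) acting by f *m _.
   - A submodule C of R^b is a predicate 'cV[R]_b -> Prop.
   - A VIC(R)-module over k with finite-dimensional values: M(R^n) = k^(vdim n)
     (row vectors), a morphism (f,C) acting by the matrix vact f C (row vectors
     multiply on the left, so functoriality reads M(g o f) = M(f) *m M(g)). *)

Section VIC.
Variable R : pzRingType.

Definition isVICmor (a b : nat) (f : 'M[R]_(b, a)) (C : 'cV[R]_b -> Prop) : Prop :=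
  (forall x : 'cV[R]_a, f *m x = 0 -> x = 0) /\
  C 0 /\
  (forall u v, C u -> C v -> C (u + v)) /\
  (forall u (r : R), C u -> C (u *m r%:M)) /\
  (forall v : 'cV[R]_b, exists x c, C c /\ v = f *m x + c) /\
  (forall x : 'cV[R]_a, C (f *m x) -> f *m x = 0).

Definition VICcompC (b c : nat) (f2 : 'M[R]_(c, b)) (C1 : 'cV[R]_b -> Prop)
  (C2 : 'cV[R]_c -> Prop) : 'cV[R]_c -> Prop :=
  fun v => exists c2 c1, [/\ C2 c2, C1 c1 & v = c2 + f2 *m c1].

(* the zero submodule (complement of an isomorphism) *)
Definition VICzeroC (n : nat) : 'cV[R]_n -> Prop := fun v => v = 0.

(* standard inclusion A -> A (+) R, R^n -> R^(n+1) (new coordinate last),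
   with complement the last coordinate line *)
Definition incl_mx (n : nat) : 'M[R]_(n.+1, n) :=
  \matrix_(i < n.+1, j < n) ((i : nat) == j)%:R.
Definition incl_C (n : nat) : 'cV[R]_n.+1 -> Prop :=
  fun v => forall i : 'I_n.+1, (i < n)%N -> v i 0 = 0.

(* (f, C) : A1 -> A2 induces (f (+) id, C) : A1 (+) R -> A2 (+) R *)
Definition lift_mx (a b : nat) (f : 'M[R]_(b, a)) : 'M[R]_(b.+1, a.+1) :=
  castmx (addn1 b, addn1 a) (block_mx f 0 0 (1%:M : 'M[R]_1)).
Definition lift_C (b : nat) (C : 'cV[R]_b -> Prop) : 'cV[R]_b.+1 -> Prop :=
  fun v => v ord_max 0 = 0 /\ C (\col_(i < b) v (widen_ord (leqnSn b) i) 0).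

Definition elem_mx (n : nat) (i j : 'I_n) (r : R) : 'M[R]_n :=
  1%:M + r *: delta_mx i j.

Variable k : fieldType.

Record VICmod := {
  vdim : nat -> nat;
  vact : forall a b : nat, 'M[R]_(b, a) -> ('cV[R]_b -> Prop) ->
         'M[k]_(vdim a, vdim b);
  vact_id : forall a, vact (1%:M : 'M[R]_a) (@VICzeroC a) = 1%:M;
  vact_comp : forall a b c (f1 : 'M[R]_(b, a)) C1 (f2 : 'M[R]_(c, b)) C2,
      isVICmor f1 C1 -> isVICmor f2 C2 ->
      vact (f2 *m f1) (VICcompC f2 C1 C2) = vact f1 C1 *m vact f2 C2
}.

(* Subquotient presentation N(n) = k^(pamb n) / rowspace (psub n), with
   maps induced by the matrices pact.  Needed to iterate the derivative D. *)
Record pmod := {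
  pamb : nat -> nat;
  psub : forall n, 'M[k]_(pamb n);
  pact : forall a b : nat, 'M[R]_(b, a) -> ('cV[R]_b -> Prop) ->
         'M[k]_(pamb a, pamb b)
}.

Definition pmod_of (M : VICmod) : pmod :=
  {| pamb := vdim M; psub := fun n => 0; pact := @vact M |}.

(* DN(A) = N(A (+) R) / Im (N(A) -> N(A (+) R)) *)
Definition pderiv (N : pmod) : pmod :=
  {| pamb := fun n => pamb N n.+1;
     psub := fun n => (psub N n.+1 + pact N (incl_mx n) (@incl_C n))%MS;
     pact := fun a b f C => pact N (lift_mx f) (lift_C C) |}.

Definition pvanish (N : pmod) (m : nat) : Prop :=
  forall n, (m <= n)%N -> (1%:M <= psub N n)%MS.

Definition pinj (N : pmod) (m : nat) : Prop :=
  forall a b (f : 'M[R]_(b, a)) C, (m <= a)%N -> isVICmor f C ->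
    forall v : 'rV[k]_(pamb N a),
      (v *m pact N f C <= psub N b)%MS -> (v <= psub N a)%MS.

(* poly_rec j N m : N polynomial of degree j - 1 starting at m *)
Fixpoint poly_rec (j : nat) (N : pmod) (m : nat) : Prop :=
  match j with
  | 0 => pvanish N m
  | j'.+1 => pinj N m /\ poly_rec j' (pderiv N) m.-1
  end.

Definition VICpolynomial (M : VICmod) (d : int) (m : nat) : Prop :=
  match d with
  | Posz n => poly_rec n.+1 (pmod_of M) m
  | Negz 0 => poly_rec 0 (pmod_of M) m
  | Negz _ => False
  end.

Definition unipotent (n : nat) (F : 'M[k]_n) : Prop :=
  exists e : nat, (F - 1%:M) ^+ e = 0.

End VIC.

(* We work with "presented" VIC-modules N (records pmod: N(R^n) is a quotient
   k^(pamb n) / psub n, morphisms act by matrices) that are functorial and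
   respect the subspaces; this class contains every VIC-module and is closed
   under the derivative D.  Call N eventually unipotent from u if for every
   n >= u every elementary matrix E_ij(r) of GL_n(R) acts unipotently on N(R^n).

   The theorem follows by induction on the degree from two facts:
   - a module vanishing from rank m is eventually unipotent from m;
   - if DN is eventually unipotent from u, then N is so from u + 4.
   For the second, conjugate E_ij(r) into E = E_{i0 j0}(r) on R^(p+2) with
   i0, j0 < p, and let X = N(E) - 1.  Unipotence of E on DN(R^(p+1)) and on
   DN(R^p) gives X^e <= S + K, where S is the subspace of N(R^(p+2)) and K the
   image of N(R^p).  The swap P of the last two coordinates fixes K, and
   E = [E_{i0 a}(1), E_{a j0}(r)] with a = p; replacing E_{a j0} by
   P E_{b j0} P (b = p + 1) modulo S turns this commutator into the trivial
   one [E_{i0 a}(1), E_{b j0}(r)], whence X^(e+1) <= S. *)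

From HB Require Import structures.
From mathcomp Require Import all_boot all_order all_algebra fingroup perm.
From Stdlib Require Import FunctionalExtensionality PropExtensionality.
From mathcomp Require Import zify.
Set Implicit Arguments. Unset Strict Implicit. Unset Printing Implicit Defensive.
Import Order.TTheory GRing.Theory Num.Theory.
Local Open Scope ring_scope.

Notation widen1 := (widen_ord (leqnSn _)).

Section ElementaryMatrices.
Variable R : pzRingType.

(* Matrix units have central (integer) entries, so scalars pass through them;
   this is the product rule for scaled matrix units over a noncommutative R. *)
Lemma scaled_delta_mul n (i j i' j' : 'I_n) (r s : R) :
  (r *: delta_mx i j : 'M[R]_n) *m (s *: delta_mx i' j') =
  if j == i' then (r * s) *: delta_mx i j' else 0.
Proof.
have -> : (r *: delta_mx i j : 'M[R]_n) *m (s *: delta_mx i' j') =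
          (r * s) *: (delta_mx i j *m delta_mx i' j').
  apply/matrixP => x y; rewrite !mxE mulr_sumr; apply: eq_bigr => z _.
  rewrite !mxE -!mulrA; congr (_ * _); rewrite !mulrA; congr (_ * _).
  exact/esym/commr_nat.
by case: eqP => [->|/eqP h]; rewrite ?mul_delta_mx // mul_delta_mx_0 // scaler0.
Qed.

Lemma elem_mx0 n (i j : 'I_n) : elem_mx i j (0 : R) = 1%:M.
Proof. by rewrite /elem_mx scale0r addr0. Qed.

Lemma elem_mx_add n (i j : 'I_n) (r s : R) : i != j ->
  elem_mx i j r *m elem_mx i j s = elem_mx i j (r + s).
Proof.
move=> h; rewrite /elem_mx !mulmxDl !mulmxDr !mul1mx !mulmx1 scaled_delta_mul.
by rewrite eq_sym (negbTE h) addr0 scalerDl -addrA [X in _ + X]addrC.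
Qed.

Lemma elem_mx_commute n (i j i' j' : 'I_n) (r s : R) : j != i' -> j' != i ->
  elem_mx i j r *m elem_mx i' j' s = elem_mx i' j' s *m elem_mx i j r.
Proof.
move=> h1 h2; rewrite /elem_mx !mulmxDl !mulmxDr !mul1mx !mulmx1 !scaled_delta_mul.
by rewrite (negbTE h1) (negbTE h2) !addr0 -!addrA [_ *: _ + _]addrC.
Qed.

(* The Steinberg relation [E_ia(1), E_aj(r)] = E_ij(r), in the form
   E_ia(1) E_aj(r) = E_ij(r) E_aj(r) E_ia(1). *)
Lemma elem_mx_commutator n (i a j : 'I_n) (r : R) : i != a -> a != j -> i != j ->
  elem_mx i a 1 *m elem_mx a j r = elem_mx i j r *m elem_mx a j r *m elem_mx i a 1.
Proof.
move=> h1 h2 h3; rewrite /elem_mx !mulmxDl !mulmxDr !mul1mx !mulmx1 !scaled_delta_mul.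
rewrite ?mulmxDl ?mulmxDr ?mul1mx ?mulmx1 ?scaled_delta_mul eqxx (eq_sym j i) (negbTE h3).
rewrite (eq_sym j a) (negbTE h2) mul0mx !addr0 !mul1r -!addrA.
by do 3!congr (_ + _); rewrite addrC.
Qed.

Lemma elem_mx_conj_perm n (t : {perm 'I_n}) i j (r : R) :
  perm_mx t *m elem_mx i j r *m perm_mx (t^-1)%g =
  elem_mx ((t^-1)%g i) ((t^-1)%g j) r.
Proof.
rewrite -row_permE -col_permE; apply/matrixP => x y; rewrite !mxE (inj_eq perm_inj).
have E z w : (t z == w) = (z == (t^-1)%g w).
  by apply/eqP/eqP => [<-|->]; rewrite ?permK ?permKV.
by rewrite !E.
Qed.

Lemma perm_mxV n (t : {perm 'I_n}) : perm_mx t *m perm_mx (t^-1)%g = 1%:M :> 'M[R]_n.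
Proof. by rewrite -perm_mxM mulgV perm_mx1. Qed.

Lemma perm_mxVK n (t : {perm 'I_n}) : perm_mx (t^-1)%g *m perm_mx t = 1%:M :> 'M[R]_n.
Proof. by rewrite -perm_mxM mulVg perm_mx1. Qed.

End ElementaryMatrices.

Variant ord_succ_spec q : 'I_q.+1 -> Type :=
 | OrdOld (x : 'I_q) : ord_succ_spec (widen1 x)
 | OrdLast : ord_succ_spec ord_max.

Lemma ord_succP q (x : 'I_q.+1) : ord_succ_spec x.
Proof.
case: (ltnP x q) => h.
  have -> : x = widen1 (Ordinal h) by apply: val_inj.
  by constructor.
have -> : x = ord_max by apply: val_inj; apply/eqP; rewrite eqn_leq h -ltnS ltn_ord.
by constructor.
Qed.

Lemma widen1_eq q (x y : 'I_q) : (widen1 x == widen1 y :> 'I_q.+1) = (x == y).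
Proof. by rewrite -!val_eqE. Qed.

Lemma widen1_neq_max q (x : 'I_q) : (widen1 x == ord_max :> 'I_q.+1) = false.
Proof. by apply/negbTE; rewrite -val_eqE /= neq_ltn ltn_ord. Qed.

Lemma max_neq_widen1 q (x : 'I_q) : (ord_max == widen1 x :> 'I_q.+1) = false.
Proof. by rewrite eq_sym widen1_neq_max. Qed.

Definition ordE := (widen1_eq, widen1_neq_max, max_neq_widen1, eqxx).

Section LiftInclusion.
Variable R : pzRingType.

Lemma lift_mx_entries a b (f : 'M[R]_(b, a)) :
  [/\ forall x y, lift_mx f (widen1 x) (widen1 y) = f x y,
      forall x, lift_mx f (widen1 x) ord_max = 0,
      forall y, lift_mx f ord_max (widen1 y) = 0
    & lift_mx f ord_max ord_max = 1].
Proof.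
have cl q (x : 'I_q) : cast_ord (esym (addn1 q)) (widen1 x) = lshift 1 x.
  exact: val_inj.
have cm q : cast_ord (esym (addn1 q)) ord_max = rshift q (0 : 'I_1).
  by apply: val_inj => /=; rewrite addn0.
rewrite /lift_mx; split=> *; rewrite castmxE ?cl ?cm.
- by rewrite block_mxEul.
- by rewrite block_mxEur mxE.
- by rewrite block_mxEdl mxE.
- by rewrite block_mxEdr mxE.
Qed.

Definition liftE a b (f : 'M[R]_(b, a)) :=
  let: And4 ww wm mw mm := lift_mx_entries f in (ww, wm, mw, mm).

Lemma lift_mx_mul a b c (f : 'M[R]_(c, b)) (g : 'M[R]_(b, a)) :
  lift_mx (f *m g) = lift_mx f *m lift_mx g.
Proof.
apply/matrixP => x y; rewrite [RHS]mxE big_ord_recr /=.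
case: (ord_succP x) => [x'|]; case: (ord_succP y) => [y'|];
  rewrite !liftE ?mulr0 ?mul0r ?addr0 ?mulr1.
- by rewrite mxE; apply: eq_bigr => z _; rewrite !liftE.
- by rewrite big1 // => z _; rewrite !liftE mulr0.
- by rewrite big1 // => z _; rewrite !liftE mul0r.
- by rewrite big1 ?add0r // => z _; rewrite !liftE mul0r.
Qed.

Lemma lift_mx1 a : lift_mx (1%:M : 'M[R]_a) = 1%:M.
Proof.
apply/matrixP => x y; rewrite [RHS]mxE.
by case: (ord_succP x) => [x'|]; case: (ord_succP y) => [y'|]; rewrite !liftE ?mxE ?ordE.
Qed.

Lemma lift_elem_mx q (i j : 'I_q) (r : R) :
  lift_mx (elem_mx i j r) = elem_mx (widen1 i) (widen1 j) r.
Proof.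
apply/matrixP => x y; rewrite /elem_mx !mxE.
by case: (ord_succP x) => [x'|]; case: (ord_succP y) => [y'|];
  rewrite !liftE ?mxE ?ordE ?andbF ?andFb ?mulr0 ?addr0.
Qed.

Lemma incl_mx_old q (x : 'I_q) y : incl_mx R q (widen1 x) y = (x == y)%:R.
Proof. by rewrite mxE. Qed.

Lemma incl_mx_last q y : incl_mx R q ord_max y = 0.
Proof. by rewrite mxE /= eqn_leq leqNgt ltn_ord. Qed.

Lemma sum_delta_l n (x : 'I_n) (F : 'I_n -> R) : \sum_z ((x == z)%:R * F z) = F x.
Proof.
rewrite (bigD1 x) //= eqxx mul1r big1 ?addr0 // => z hz.
by rewrite eq_sym (negbTE hz) mul0r.
Qed.

Lemma sum_delta_r n (x : 'I_n) (F : 'I_n -> R) : \sum_z (F z * (z == x)%:R) = F x.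
Proof.
rewrite (bigD1 x) //= eqxx mulr1 big1 ?addr0 // => z hz.
by rewrite (negbTE hz) mulr0.
Qed.

Lemma lift_mx_incl a b (f : 'M[R]_(b, a)) :
  lift_mx f *m incl_mx R a = incl_mx R b *m f.
Proof.
apply/matrixP => x y; rewrite !mxE big_ord_recr /= incl_mx_last mulr0 addr0.
case: (ord_succP x) => [x'|].
- under eq_bigr => z _ do rewrite incl_mx_old liftE.
  rewrite sum_delta_r -(sum_delta_l x' (fun z => f z y)).
  by apply: eq_bigr => z _; rewrite mxE.
- rewrite big1; last by move=> z _; rewrite liftE mul0r.
  by rewrite big1 // => z _; rewrite incl_mx_last mul0r.
Qed.

Lemma incl_mx2E q x y : (incl_mx R q.+1 *m incl_mx R q) x y = ((x : nat) == y)%:R.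
Proof.
rewrite !mxE big_ord_recr /= incl_mx_last mulr0 addr0 (bigD1 y) //= big1 ?addr0.
  by rewrite !mxE eqxx mulr1.
by move=> z hz; rewrite !mxE /=; move: hz; rewrite -val_eqE /= => /negbTE ->; rewrite mulr0.
Qed.

End LiftInclusion.

Section Columns.
Variable R : pzRingType.

Definition top q (v : 'cV[R]_q.+1) : 'cV[R]_q := \col_(i < q) v (widen1 i) 0.

Definition mkcol q (w : 'cV[R]_q) (t : R) : 'cV[R]_q.+1 :=
  \col_(i < q.+1) (if (insub (val i) : option 'I_q) is Some i' then w i' 0 else t).

Lemma colP_top q (v1 v2 : 'cV[R]_q.+1) :
  top v1 = top v2 -> v1 ord_max 0 = v2 ord_max 0 -> v1 = v2.
Proof.
move=> h1 h2; apply/matrixP => x y; rewrite (ord1 y).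
case: (ord_succP x) => [x'|] //.
by move/matrixP: h1 => /(_ x' 0); rewrite !mxE.
Qed.

Lemma top_mkcol q (w : 'cV[R]_q) t : top (mkcol w t) = w.
Proof.
apply/matrixP => x y; rewrite (ord1 y) !mxE /= insubT /=; first by rewrite ltn_ord.
by move=> h; congr (w _ 0); apply: val_inj.
Qed.

Lemma last_mkcol q (w : 'cV[R]_q) t : mkcol w t ord_max 0 = t.
Proof. by rewrite !mxE /= insubF // ltnn. Qed.

Lemma topE q (v : 'cV[R]_q.+1) : top v = (incl_mx R q)^T *m v.
Proof.
apply/matrixP => x y; rewrite !mxE (ord1 y) big_ord_recr /= mxE incl_mx_last mul0r addr0.
rewrite (bigD1 x) //= big1 ?addr0; first by rewrite mxE incl_mx_old eqxx mul1r.
by move=> z hz; rewrite mxE incl_mx_old (negbTE hz) mul0r.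
Qed.

Lemma top0 q : top (0 : 'cV[R]_q.+1) = 0.
Proof. by rewrite topE mulmx0. Qed.

Lemma topD q (u v : 'cV[R]_q.+1) : top (u + v) = top u + top v.
Proof. by rewrite !topE mulmxDr. Qed.

Lemma topN q (u : 'cV[R]_q.+1) : top (- u) = - top u.
Proof. by rewrite !topE mulmxN. Qed.

Lemma topM q (u : 'cV[R]_q.+1) (B : 'M[R]_1) : top (u *m B) = top u *m B.
Proof. by rewrite !topE mulmxA. Qed.

Lemma lastD q (u v : 'cV[R]_q.+1) : (u + v) ord_max 0 = u ord_max 0 + v ord_max 0.
Proof. by rewrite mxE. Qed.

Lemma lastM q (u : 'cV[R]_q.+1) (r : R) : (u *m r%:M) ord_max 0 = u ord_max 0 * r.
Proof. by rewrite !mxE big_ord1 mxE eqxx mulr1n. Qed.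

Lemma top_lift a b (f : 'M[R]_(b, a)) (v : 'cV[R]_a.+1) :
  top (lift_mx f *m v) = f *m top v.
Proof.
apply/matrixP => x y; rewrite !mxE (ord1 y) big_ord_recr /= liftE mul0r addr0.
by apply: eq_bigr => z _; rewrite !mxE liftE.
Qed.

Lemma last_lift a b (f : 'M[R]_(b, a)) (v : 'cV[R]_a.+1) :
  (lift_mx f *m v) ord_max 0 = v ord_max 0.
Proof.
rewrite !mxE big_ord_recr /= liftE mul1r big1 ?add0r // => z _.
by rewrite liftE mul0r.
Qed.

Lemma top_incl q (w : 'cV[R]_q) : top (incl_mx R q *m w) = w.
Proof.
apply/matrixP => x y; rewrite !mxE (ord1 y).
by under eq_bigr => z _ do rewrite incl_mx_old; rewrite sum_delta_l.
Qed.

Lemma last_incl q (w : 'cV[R]_q) : (incl_mx R q *m w) ord_max 0 = 0.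
Proof. by rewrite mxE big1 // => z _; rewrite incl_mx_last mul0r. Qed.

Lemma incl_C_top q (v : 'cV[R]_q.+1) : incl_C v <-> top v = 0.
Proof.
split=> [h|h i hi].
  by apply/matrixP => x y; rewrite (ord1 y) !mxE; apply: h => /=; exact: ltn_ord.
by move/matrixP: h => /(_ (Ordinal hi) 0); rewrite !mxE => <-; congr (v _ 0); apply: val_inj.
Qed.

End Columns.

Lemma pred_ext T (P Q : T -> Prop) : (forall x, P x <-> Q x) -> P = Q.
Proof.
by move=> h; apply: functional_extensionality => x; apply: propositional_extensionality.
Qed.

Section VICMorphisms.
Variable R : pzRingType.

Lemma iso_isVICmor n (g g' : 'M[R]_n) : g' *m g = 1%:M -> g *m g' = 1%:M ->
  isVICmor g (@VICzeroC R n).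
Proof.
move=> h1 h2; rewrite /isVICmor /VICzeroC; split.
  by move=> x hx; rewrite -(mul1mx x) -h1 -mulmxA hx mulmx0.
split=> //; split; first by move=> u v -> ->; rewrite addr0.
split; first by move=> u r ->; rewrite mul0mx.
by split=> // v; exists (g' *m v), 0; rewrite addr0 mulmxA h2 mul1mx.
Qed.

Lemma incl_isVICmor q : isVICmor (incl_mx R q) (@incl_C R q).
Proof.
split; first by move=> x hx; rewrite -(top_incl x) hx top0.
split; first by apply/incl_C_top; rewrite top0.
split.
  by move=> u v /incl_C_top hu /incl_C_top hv; apply/incl_C_top; rewrite topD hu hv addr0.
split; first by move=> u r /incl_C_top hu; apply/incl_C_top; rewrite topM hu mul0mx.
split; last by move=> x /incl_C_top; rewrite top_incl => ->; rewrite mulmx0.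
move=> v; exists (top v), (v - incl_mx R q *m top v); split; last by rewrite addrC subrK.
by apply/incl_C_top; rewrite topD topN top_incl subrr.
Qed.

Lemma lift_CP b (C : 'cV[R]_b -> Prop) v :
  lift_C C v <-> v ord_max 0 = 0 /\ C (top v).
Proof. by []. Qed.

Lemma lift_isVICmor a b (f : 'M[R]_(b, a)) C :
  isVICmor f C -> isVICmor (lift_mx f) (lift_C C).
Proof.
case=> hinj [h0 [hadd [hsc [hdec hint]]]].
split.
  move=> x hx; apply: colP_top; last by rewrite -(last_lift f) hx !mxE.
  by rewrite top0; apply: hinj; rewrite -top_lift hx top0.
split; first by apply/lift_CP; rewrite mxE top0.
split.
  move=> u v /lift_CP[hu1 hu2] /lift_CP[hv1 hv2]; apply/lift_CP.
  by rewrite lastD hu1 hv1 addr0 topD; split=> //; apply: hadd.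
split.
  move=> u r /lift_CP[hu1 hu2]; apply/lift_CP.
  by rewrite lastM hu1 mul0r topM; split=> //; apply: hsc.
split.
  move=> v; have [x [c [hc he]]] := hdec (top v).
  exists (mkcol x (v ord_max 0)), (mkcol c 0); split.
    by apply/lift_CP; rewrite last_mkcol top_mkcol.
  apply: colP_top; first by rewrite topD top_lift !top_mkcol.
  by rewrite lastD last_lift !last_mkcol addr0.
move=> x /lift_CP[h1 h2]; apply: colP_top; last by rewrite h1 mxE.
by rewrite top0 top_lift; apply: hint; rewrite -top_lift.
Qed.

Lemma comp_isVICmor a b c (f1 : 'M[R]_(b, a)) C1 (f2 : 'M[R]_(c, b)) C2 :
  isVICmor f1 C1 -> isVICmor f2 C2 -> isVICmor (f2 *m f1) (VICcompC f2 C1 C2).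
Proof.
case=> i1 [z1 [a1 [s1 [d1 t1]]]]; case=> i2 [z2 [a2 [s2 [d2 t2]]]].
split; first by move=> x hx; apply: i1; apply: i2; rewrite mulmxA.
split; first by exists 0, 0; split; rewrite ?mulmx0 ?addr0.
split.
  move=> u v [c2 [c1 [hc2 hc1 ->]]] [c2' [c1' [hc2' hc1' ->]]].
  exists (c2 + c2'), (c1 + c1'); split; [exact: a2 | exact: a1 |].
  by rewrite mulmxDr addrACA.
split.
  move=> u r [c2 [c1 [hc2 hc1 ->]]]; exists (c2 *m r%:M), (c1 *m r%:M).
  by split; [exact: s2 | exact: s1 | rewrite mulmxDl mulmxA].
split.
  move=> v; have [y [c2 [hc2 ->]]] := d2 v; have [x [c1 [hc1 ->]]] := d1 y.
  exists x, (c2 + f2 *m c1); split; first by exists c2, c1.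
  by rewrite mulmxDr mulmxA -addrA [c2 + _]addrC.
move=> x [c2 [c1 [hc2 hc1 he]]].
have h0 : f2 *m (f1 *m x - c1) = 0 by apply: t2; rewrite mulmxBr mulmxA he addrK.
have e1 : f1 *m x = c1 by apply/eqP; rewrite -subr_eq0; apply/eqP; apply: i2.
by rewrite -mulmxA (t1 x) ?mulmx0 // e1.
Qed.

Lemma lift_zeroC b : lift_C (@VICzeroC R b) = @VICzeroC R b.+1.
Proof.
apply: pred_ext => v; rewrite lift_CP /VICzeroC; split.
  by move=> [h1 h2]; apply: colP_top; rewrite ?top0 ?h1 ?mxE.
by move=> ->; rewrite mxE top0.
Qed.

Lemma compC_zero a b (g : 'M[R]_(b, a)) :
  VICcompC g (@VICzeroC R a) (@VICzeroC R b) = @VICzeroC R b.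
Proof.
apply: pred_ext => v; rewrite /VICcompC /VICzeroC; split.
  by move=> [c2 [c1 [-> -> ->]]]; rewrite mulmx0 addr0.
by move=> ->; exists 0, 0; rewrite mulmx0 addr0.
Qed.

Lemma lift_compC b c (f2 : 'M[R]_(c, b)) (C1 : 'cV[R]_b -> Prop) C2 :
  lift_C (VICcompC f2 C1 C2) = VICcompC (lift_mx f2) (lift_C C1) (lift_C C2).
Proof.
apply: pred_ext => v; rewrite lift_CP; split.
  move=> [hl [c2 [c1 [hc2 hc1 he]]]].
  exists (mkcol c2 0), (mkcol c1 0).
  split; try by apply/lift_CP; rewrite last_mkcol top_mkcol.
  apply: colP_top; first by rewrite topD top_lift !top_mkcol.
  by rewrite lastD last_lift !last_mkcol hl addr0.
move=> [c2 [c1 [/lift_CP[h21 h22] /lift_CP[h11 h12] ->]]].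
rewrite lastD last_lift h21 h11 addr0 topD top_lift; split=> //.
by exists (top c2), (top c1).
Qed.

Lemma lift_inclC a b (f : 'M[R]_(b, a)) (C : 'cV[R]_b -> Prop) :
  VICcompC (lift_mx f) (@incl_C R a) (lift_C C) = VICcompC (incl_mx R b) C (@incl_C R b).
Proof.
apply: pred_ext => v; split.
  move=> [c2 [c1 [/lift_CP[h21 h22] /incl_C_top h1 ->]]].
  exists (mkcol 0 ((lift_mx f *m c1) ord_max 0)), (top c2).
  split=> //; first by apply/incl_C_top; rewrite top_mkcol.
  apply: colP_top; first by rewrite !topD top_lift h1 mulmx0 addr0 top_mkcol top_incl add0r.
  by rewrite !lastD last_mkcol h21 add0r last_incl addr0.
move=> [c2 [c1 [/incl_C_top h2 h1 ->]]].
exists (mkcol c1 0), (mkcol 0 (c2 ord_max 0)); split.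
- by apply/lift_CP; rewrite last_mkcol top_mkcol.
- by apply/incl_C_top; rewrite top_mkcol.
- apply: colP_top; first by rewrite !topD top_incl h2 top_lift !top_mkcol mulmx0 addr0 add0r.
  by rewrite !lastD last_lift !last_mkcol last_incl add0r addr0.
Qed.

End VICMorphisms.

Section Functoriality.
Variables (R : pzRingType) (k : fieldType).

(* A presented module N is functorial when its matrices respect identities and
   composition of VIC(R)-morphisms and map each subspace psub into the next;
   then n |-> k^(pamb N n) / psub N n is a VIC(R)-module. *)
Definition functorial (N : pmod R k) : Prop :=
  (forall a, pact N (1%:M : 'M[R]_a) (@VICzeroC R a) = 1%:M) /\
  (forall a b c (f1 : 'M[R]_(b, a)) C1 (f2 : 'M[R]_(c, b)) C2,
     isVICmor f1 C1 -> isVICmor f2 C2 ->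
     pact N (f2 *m f1) (VICcompC f2 C1 C2) = pact N f1 C1 *m pact N f2 C2) /\
  (forall a b (f : 'M[R]_(b, a)) C, isVICmor f C ->
     (psub N a *m pact N f C <= psub N b)%MS).

Lemma functorial_pmod_of (M : VICmod R k) : functorial (pmod_of M).
Proof.
split; first exact: vact_id.
split; first by move=> *; apply: vact_comp.
by move=> a b f C _ /=; rewrite mul0mx sub0mx.
Qed.

(* The derivative of a functorial module is functorial: the image of
   N(A) -> N(A (+) R) is preserved by f (+) id by naturality of the inclusion. *)
Lemma functorial_pderiv (N : pmod R k) : functorial N -> functorial (pderiv N).
Proof.
case=> [h1 [h2 h3]]; split; first by move=> a /=; rewrite lift_mx1 lift_zeroC h1.
split=> [a b c f1 C1 f2 C2 v1 v2 | a b f C v] /=.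
  by rewrite lift_mx_mul lift_compC h2 //; apply: lift_isVICmor.
rewrite addsmxMr addsmx_sub; apply/andP; split.
  by apply: submx_trans (h3 _ _ _ _ (lift_isVICmor v)) _; apply: addsmxSl.
rewrite -h2; [|exact: incl_isVICmor|exact: lift_isVICmor].
rewrite lift_mx_incl lift_inclC h2 //; last exact: incl_isVICmor.
by apply: submx_trans (submxMl _ _) _; apply: addsmxSr.
Qed.

Definition gact (N : pmod R k) n (g : 'M[R]_n) := pact N g (@VICzeroC R n).

Lemma gact_pderiv (N : pmod R k) n (g : 'M[R]_n) : gact (pderiv N) g = gact N (lift_mx g).
Proof. by rewrite /gact /= lift_zeroC. Qed.

Definition unipotent_mod (N : pmod R k) n (A : 'M[k]_(pamb N n)) : Prop :=
  exists e : nat, ((A - 1%:M) ^+ e <= psub N n)%MS.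

Definition invertible n (g : 'M[R]_n) := exists g', g' *m g = 1%:M /\ g *m g' = 1%:M.

Lemma invertible_mul n (g1 g2 : 'M[R]_n) :
  invertible g1 -> invertible g2 -> invertible (g1 *m g2).
Proof.
case=> g1' [a1 a2] [g2' [b1 b2]]; exists (g2' *m g1'); split.
  by rewrite mulmxA -(mulmxA g2') a1 mulmx1 b1.
by rewrite mulmxA -(mulmxA g1) b2 mulmx1 a2.
Qed.

Lemma invertible_elem n (i j : 'I_n) (r : R) : i != j -> invertible (elem_mx i j r).
Proof.
by move=> h; exists (elem_mx i j (- r)); rewrite !elem_mx_add // ?addNr ?subrr elem_mx0.
Qed.

Lemma invertible_perm n (t : {perm 'I_n}) : invertible (perm_mx t : 'M[R]_n).
Proof. by exists (perm_mx (t^-1)%g); rewrite perm_mxV perm_mxVK. Qed.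

Lemma invertible_lift n (g : 'M[R]_n) : invertible g -> invertible (lift_mx g).
Proof.
by case=> g' [h1 h2]; exists (lift_mx g'); rewrite -!lift_mx_mul h1 h2 lift_mx1.
Qed.

Lemma invertible_isVICmor n (g : 'M[R]_n) : invertible g -> isVICmor g (@VICzeroC R n).
Proof. by case=> g' [h1 h2]; apply: iso_isVICmor h1 h2. Qed.

Section Action.
Variable N : pmod R k.
Hypothesis NF : functorial N.

Lemma gact_mul n (g1 g2 : 'M[R]_n) : invertible g1 -> invertible g2 ->
  gact N (g2 *m g1) = gact N g1 *m gact N g2.
Proof.
move=> u1 u2; case: NF => _ [h2 _].
by rewrite /gact -{1}(compC_zero g2) h2 //; apply: invertible_isVICmor.
Qed.

Lemma gact_mul3 n (g1 g2 g3 : 'M[R]_n) :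
  invertible g1 -> invertible g2 -> invertible g3 ->
  gact N (g1 *m g2 *m g3) = gact N g3 *m gact N g2 *m gact N g1.
Proof. by move=> u1 u2 u3; rewrite !gact_mul ?mulmxA //; apply: invertible_mul. Qed.

Lemma gact1 n : gact N (1%:M : 'M[R]_n) = 1%:M.
Proof. by case: NF. Qed.

Lemma gact_incl q (g : 'M[R]_q) : invertible g ->
  pact N (incl_mx R q) (@incl_C R q) *m gact N (lift_mx g) =
  gact N g *m pact N (incl_mx R q) (@incl_C R q).
Proof.
move=> u; case: NF => _ [h2 _]; rewrite /gact.
rewrite -h2; [|exact: incl_isVICmor|exact/invertible_isVICmor/invertible_lift].
rewrite -h2; [|exact: invertible_isVICmor|exact: incl_isVICmor].
by rewrite lift_mx_incl -lift_zeroC lift_inclC.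
Qed.

Lemma psub_stable a b (f : 'M[R]_(b, a)) C (A : 'M[k]_(pamb N a)) :
  isVICmor f C -> (A <= psub N a)%MS -> (A *m pact N f C <= psub N b)%MS.
Proof.
move=> v h; case: NF => _ [_ h3].
exact: submx_trans (submxMr _ h) (h3 _ _ _ _ v).
Qed.

End Action.
End Functoriality.

Section SubspaceAlgebra.
Variable k : fieldType.

Lemma mx_exprS d (A : 'M[k]_d) e : A ^+ e.+1 = A ^+ e *m A.
Proof. by rewrite exprSr mulmxE. Qed.

Lemma intertwine_expr d1 d2 (I : 'M[k]_(d1, d2)) A B e :
  I *m A = B *m I -> I *m A ^+ e = B ^+ e *m I.
Proof.
move=> h; elim: e => [|e IH]; first by rewrite !expr0 mulmx1 mul1mx.
by rewrite mx_exprS mulmxA IH -mulmxA h mulmxA -mx_exprS.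
Qed.

Lemma stable_expr d1 d (S : 'M[k]_(d1, d)) (A : 'M[k]_d) e :
  (S *m A <= S)%MS -> (S *m A ^+ e <= S)%MS.
Proof.
move=> h; elim: e => [|e IH]; first by rewrite expr0 mulmx1.
by rewrite mx_exprS mulmxA; apply: submx_trans (submxMr _ IH) h.
Qed.

Lemma conj_expr d (P P' A : 'M[k]_d) e : P *m P' = 1%:M -> P' *m P = 1%:M ->
  (P' *m A *m P) ^+ e = P' *m A ^+ e *m P.
Proof.
move=> h h'; elim: e => [|e IH]; first by rewrite !expr0 mulmx1.
rewrite !mx_exprS IH -!mulmxA; congr (_ *m _).
by rewrite [P *m _]mulmxA h mul1mx !mulmxA.
Qed.

Lemma expr_two_steps d d' d'' s s' (S : 'M[k]_(s, d)) (S' : 'M[k]_(s', d'))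
    (J1 : 'M[k]_(d', d)) (J2 : 'M[k]_(d'', d')) (X : 'M[k]_d) (X' : 'M[k]_d') e1 e2 :
  (S *m X <= S)%MS -> (S' *m J1 <= S)%MS -> J1 *m X = X' *m J1 ->
  (X ^+ e1 <= S + J1)%MS -> (X' ^+ e2 <= S' + J2)%MS ->
  (X ^+ (e1 + e2) <= S + J2 *m J1)%MS.
Proof.
move=> SX SJ JX H1 H2; rewrite exprD -mulmxE.
apply: submx_trans (submxMr _ H1) _; rewrite addsmxMr addsmx_sub.
apply/andP; split; first exact: submx_trans (stable_expr _ SX) (addsmxSl _ _).
rewrite (intertwine_expr _ JX); apply: submx_trans (submxMr _ H2) _.
by rewrite addsmxMr addsmxS.
Qed.

Definition eqmod s d m (S : 'M[k]_(s, d)) (A B : 'M[k]_(m, d)) := (A - B <= S)%MS.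

Lemma eqmod_trans s d m (S : 'M[k]_(s, d)) (A B C : 'M[k]_(m, d)) :
  eqmod S A B -> eqmod S B C -> eqmod S A C.
Proof.
rewrite /eqmod => hAB hBC; have -> : A - C = (A - B) + (B - C) by rewrite addrA subrK.
exact: addmx_sub.
Qed.

Lemma eqmod_mulr s d m (S : 'M[k]_(s, d)) (A B : 'M[k]_(m, d)) (G : 'M[k]_d) :
  (S *m G <= S)%MS -> eqmod S A B -> eqmod S (A *m G) (B *m G).
Proof. by move=> SG h; rewrite /eqmod -mulmxBl; apply: submx_trans (submxMr _ h) SG. Qed.

Lemma eqmod_fixed s d m n (S : 'M[k]_(s, d)) (K : 'M[k]_(n, d)) (A : 'M[k]_(m, d)) G :
  K *m G = K -> (S *m G <= S)%MS -> (A <= K + S)%MS -> eqmod S (A *m G) A.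
Proof.
move=> KG SG /sub_addsmxP[[u1 u2] /= ->].
rewrite /eqmod mulmxDl -(mulmxA u1) KG -mulmxA opprD addrACA subrr add0r.
apply: addmx_sub; first exact: submx_trans (submxMl _ _) SG.
by rewrite eqmx_opp submxMl.
Qed.

End SubspaceAlgebra.

Section SwapLastTwo.
Variable R : pzRingType.

Definition swap2 p : {perm 'I_p.+2} := tperm (widen1 ord_max) ord_max.

Lemma swap2_old p (x : 'I_p.+2) : (x < p)%N -> swap2 p x = x.
Proof.
by move=> hx; rewrite tpermD // -val_eqE /= ?gtn_eqF // ltnW.
Qed.

Lemma swap2_new p (x : 'I_p.+2) : (p <= x)%N -> (p <= swap2 p x)%N.
Proof. by move=> hx; case: tpermP => [_|_|] //= ->. Qed.

Lemma perm_mulE n (t : {perm 'I_n}) m (A : 'M[R]_(n, m)) x y :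
  (perm_mx t *m A) x y = A (t x) y.
Proof. by rewrite -row_permE mxE. Qed.

Lemma incl2_CP p (v : 'cV[R]_p.+2) :
  VICcompC (incl_mx R p.+1) (@incl_C R p) (@incl_C R p.+1) v <-> top (top v) = 0.
Proof.
split=> [[c2 [c1 [/incl_C_top h2 /incl_C_top h1 ->]]]|h].
  by rewrite topD h2 add0r top_incl.
exists (v - incl_mx R p.+1 *m top v), (top v); split.
- by apply/incl_C_top; rewrite topD topN top_incl subrr.
- exact/incl_C_top.
- by rewrite subrK.
Qed.

Lemma swap2_incl2 p :
  perm_mx (swap2 p) *m (incl_mx R p.+1 *m incl_mx R p) = incl_mx R p.+1 *m incl_mx R p.
Proof.
apply/matrixP => x y; rewrite perm_mulE !incl_mx2E.
case: (ltnP x p) => hx; first by rewrite swap2_old.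
by rewrite !(gtn_eqF (leq_trans (ltn_ord y) _)) // swap2_new.
Qed.

Lemma swap2_incl2C p :
  VICcompC (perm_mx (swap2 p)) (VICcompC (incl_mx R p.+1) (@incl_C R p) (@incl_C R p.+1))
    (@VICzeroC R _)
  = VICcompC (incl_mx R p.+1) (@incl_C R p) (@incl_C R p.+1).
Proof.
have top2_swap (v : 'cV[R]_p.+2) : top (top (perm_mx (swap2 p) *m v)) = top (top v).
  have top2E (w : 'cV[R]_p.+2) x : top (top w) x 0 = w (widen1 (widen1 x)) 0.
    by rewrite !mxE.
  apply/matrixP => x y; rewrite (ord1 y) !top2E perm_mulE swap2_old //=; exact: ltn_ord.
apply: pred_ext => v; split.
  by move=> [c2 [c1 [-> /incl2_CP h1 ->]]]; apply/incl2_CP; rewrite add0r top2_swap.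
move=> /incl2_CP hv; exists 0, (perm_mx (swap2 p) *m v); split => //.
- by apply/incl2_CP; rewrite top2_swap.
- by rewrite add0r mulmxA -perm_mxM tperm2 perm_mx1 mul1mx.
Qed.

End SwapLastTwo.

Lemma incl2_image_swap (R : pzRingType) (k : fieldType) (N : pmod R k) p :
  functorial N ->
  pact N (incl_mx R p) (@incl_C R p) *m pact N (incl_mx R p.+1) (@incl_C R p.+1)
    *m gact N (perm_mx (swap2 p))
  = pact N (incl_mx R p) (@incl_C R p) *m pact N (incl_mx R p.+1) (@incl_C R p.+1).
Proof.
case=> _ [comp _]; have incl2 := comp_isVICmor (incl_isVICmor R p) (incl_isVICmor R p.+1).
rewrite -comp; try exact: incl_isVICmor.
rewrite /gact -comp //; last exact/invertible_isVICmor/invertible_perm.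
by rewrite swap2_incl2C swap2_incl2.
Qed.

Section CommutatorStep.
Variables (R : pzRingType) (k : fieldType) (N : pmod R k).
Hypothesis NF : functorial N.
Variables (p : nat) (i0 j0 : 'I_p) (r : R).
Hypothesis neq_i0j0 : i0 != j0.

Let i : 'I_p.+2 := widen1 (widen1 i0).
Let j : 'I_p.+2 := widen1 (widen1 j0).
Let a : 'I_p.+2 := widen1 ord_max.
Let b : 'I_p.+2 := ord_max.

Let neq_ia : i != a. Proof. by rewrite -val_eqE /= ltn_eqF. Qed.
Let neq_ja : j != a. Proof. by rewrite -val_eqE /= ltn_eqF. Qed.
Let neq_jb : j != b. Proof. by rewrite -val_eqE /= ltn_eqF // leqW. Qed.
Let neq_ab : a != b. Proof. by rewrite -val_eqE /= ltn_eqF. Qed.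
Let neq_aj : a != j. Proof. by rewrite eq_sym. Qed.
Let neq_bj : b != j. Proof. by rewrite eq_sym. Qed.
Let neq_ji : j != i. Proof. by rewrite eq_sym. Qed.
Let neq_ai : a != i. Proof. by rewrite eq_sym. Qed.

Let E := elem_mx i j r.
Let P := perm_mx (swap2 p) : 'M[R]_p.+2.
Let S := psub N p.+2.
Let K := pact N (incl_mx R p) (@incl_C R p) *m pact N (incl_mx R p.+1) (@incl_C R p.+1).

Let gact_mul4 (g1 g2 g3 g4 : 'M[R]_p.+2) :
  invertible g1 -> invertible g2 -> invertible g3 -> invertible g4 ->
  gact N (g1 *m g2 *m g3 *m g4) = gact N g4 *m gact N g3 *m gact N g2 *m gact N g1.
Proof.
move=> u1 u2 u3 u4; rewrite gact_mul ?gact_mul3 ?mulmxA //.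
by apply: invertible_mul => //; apply: invertible_mul.
Qed.

Let E_commutator :
  E = elem_mx i a 1 *m elem_mx a j r *m elem_mx i a (-1) *m elem_mx a j (- r).
Proof.
rewrite elem_mx_commutator // -(mulmxA _ (elem_mx i a 1)) elem_mx_add //.
by rewrite subrr elem_mx0 mulmx1 -mulmxA elem_mx_add // subrr elem_mx0 mulmx1.
Qed.

Let trivial_commutator :
  elem_mx i a 1 *m elem_mx b j r *m elem_mx i a (-1) *m elem_mx b j (- r) = 1%:M.
Proof.
rewrite elem_mx_commute // -(mulmxA _ (elem_mx i a 1)) elem_mx_add //.
by rewrite subrr elem_mx0 mulmx1 elem_mx_add // subrr elem_mx0.
Qed.

Let elem_aj_swap (s : R) : elem_mx a j s = P *m elem_mx b j s *m P.
Proof.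
rewrite /P /swap2 -{2}(tpermV (widen1 ord_max) ord_max) elem_mx_conj_perm.
by rewrite tpermV tpermR tpermD.
Qed.

Let invertible_elem_ia (s : R) : invertible (elem_mx i a s).
Proof. exact: invertible_elem. Qed.
Let invertible_elem_aj (s : R) : invertible (elem_mx a j s).
Proof. exact: invertible_elem. Qed.
Let invertible_elem_bj (s : R) : invertible (elem_mx b j s).
Proof. exact: invertible_elem. Qed.

Let invertible_E : invertible E.
Proof. exact: invertible_elem. Qed.

Let S_stable g : invertible g -> (S *m gact N g <= S)%MS.
Proof. by move=> u; apply: psub_stable (invertible_isVICmor u) _. Qed.

Section TrivialAction.
(* T stands for X^e, X = N(E) - 1: it lies in S + K and commutes with the
   action of every automorphism commuting with E. *)
Variable T : 'M[k]_(pamb N p.+2).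
Hypothesis T_sub : (T <= S + K)%MS.
Hypothesis T_comm : forall g, invertible g -> E *m g = g *m E ->
  gact N g *m T = T *m gact N g.

Let W_stable g (A : 'M[k]_(pamb N p.+2)) : invertible g -> E *m g = g *m E ->
  (A <= T + S)%MS -> (A *m gact N g <= T + S)%MS.
Proof.
move=> u hg hA; apply: submx_trans (submxMr _ hA) _; rewrite addsmxMr.
by apply: addsmxS; [rewrite -T_comm // submxMl | exact: S_stable].
Qed.

(* The swap acts trivially modulo S on T + S <= K + S. *)
Let swap_trivial (A : 'M[k]_(pamb N p.+2)) :
  (A <= T + S)%MS -> eqmod S (A *m gact N P) A.
Proof.
move=> hA; apply: eqmod_fixed (incl2_image_swap p NF) (S_stable (invertible_perm _ _)) _.
by apply: submx_trans hA _; rewrite addsmx_sub addsmxSr andbT addsmxC.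
Qed.

Let act_aj_bj (s : R) (A : 'M[k]_(pamb N p.+2)) : (A <= T + S)%MS ->
  eqmod S (A *m gact N (elem_mx a j s)) (A *m gact N (elem_mx b j s)).
Proof.
move=> hA; have uP : invertible P := invertible_perm _ _.
rewrite elem_aj_swap gact_mul3 // !mulmxA.
apply: eqmod_trans (eqmod_mulr (S_stable uP) (eqmod_mulr (S_stable _) (swap_trivial hA))) _.
  exact: invertible_elem_bj.
apply: swap_trivial; apply: W_stable hA => //.
by rewrite elem_mx_commute // eq_sym.
Qed.

Lemma elem_trivial_mod : eqmod S (T *m gact N E) T.
Proof.
have TW : (T <= T + S)%MS by apply: addsmxSl.
have cE_ia (s : R) : E *m elem_mx i a s = elem_mx i a s *m E.
  by rewrite elem_mx_commute.
have cE_bj (s : R) : E *m elem_mx b j s = elem_mx b j s *m E.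
  by rewrite elem_mx_commute.
(* replace E_aj(-r), then E_aj(r), by E_bj(-r), E_bj(r) in the commutator *)
have step1 := act_aj_bj (- r) TW.
have W1 : (T *m gact N (elem_mx b j (- r)) *m gact N (elem_mx i a (-1)) <= T + S)%MS.
  by do 2!apply: W_stable => //.
have step2 := act_aj_bj r W1.
have trivial : T *m gact N (elem_mx b j (- r)) *m gact N (elem_mx i a (-1))
    *m gact N (elem_mx b j r) *m gact N (elem_mx i a 1) = T.
  by rewrite -[RHS]mulmx1 -(gact1 NF) -trivial_commutator gact_mul4 // !mulmxA.
rewrite {1}E_commutator gact_mul4 // !mulmxA.
apply: (eqmod_trans (B := T *m gact N (elem_mx b j (- r)) *m gact N (elem_mx i a (-1))
    *m gact N (elem_mx a j r) *m gact N (elem_mx i a 1))).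
  apply: eqmod_mulr (S_stable (invertible_elem_ia 1)) _.
  apply: eqmod_mulr (S_stable (invertible_elem_aj r)) _.
  exact: eqmod_mulr (S_stable (invertible_elem_ia (-1))) step1.
apply: eqmod_trans (eqmod_mulr (S_stable (invertible_elem_ia 1)) step2) _.
by rewrite trivial /eqmod subrr sub0mx.
Qed.

End TrivialAction.

Let X := gact N E - 1%:M.

Let S_stable_X : (S *m X <= S)%MS.
Proof. by rewrite mulmxBr mulmx1 addmx_sub ?eqmx_opp ?S_stable. Qed.

Let commutator_step e : (X ^+ e <= S + K)%MS -> (X ^+ e.+1 <= S)%MS.
Proof.
move=> hX; rewrite mx_exprS {2}/X mulmxBr mulmx1.
apply: elem_trivial_mod hX _ => g u hg; apply: intertwine_expr.
by rewrite /X mulmxBr mulmxBl mulmx1 mul1mx -!gact_mul ?hg.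
Qed.

Lemma unipotent_of_deriv :
  unipotent_mod (gact (pderiv N) (elem_mx (widen1 i0) (widen1 j0) r)) ->
  unipotent_mod (gact (pderiv N) (elem_mx i0 j0 r)) ->
  unipotent_mod (gact N E).
Proof.
rewrite /unipotent_mod !gact_pderiv !lift_elem_mx => -[e1 H1] [e2 H2].
exists (e1 + e2).+1; apply: commutator_step.
apply: expr_two_steps S_stable_X _ _ H1 H2.
- exact: psub_stable (incl_isVICmor R p.+1) (submx_refl _).
- rewrite /X mulmxBr mulmxBl mulmx1 mul1mx /E -[elem_mx i j r]lift_elem_mx gact_incl //.
  by apply: invertible_elem; rewrite ordE.
Qed.

End CommutatorStep.

Section EventualUnipotence.
Variables (R : pzRingType) (k : fieldType).

Definition elem_unipotent_from (N : pmod R k) (u : nat) : Prop :=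
  forall n, (u <= n)%N -> forall (i j : 'I_n) (r : R), i != j ->
    unipotent_mod (gact N (elem_mx i j r)).

Lemma unipotent_mod_conj (N : pmod R k) n (g h h' : 'M[R]_n) : functorial N ->
  h *m h' = 1%:M -> h' *m h = 1%:M -> invertible g ->
  unipotent_mod (gact N g) -> unipotent_mod (gact N (h *m g *m h')).
Proof.
move=> NF hh' h'h u [e he].
have uh : invertible h by exists h'.
have uh' : invertible h' by exists h.
have ghh' : gact N h *m gact N h' = 1%:M by rewrite -gact_mul // h'h gact1.
have gh'h : gact N h' *m gact N h = 1%:M by rewrite -gact_mul // hh' gact1.
exists e; rewrite gact_mul3 //.
have -> : gact N h' *m gact N g *m gact N h - 1%:M =
          gact N h' *m (gact N g - 1%:M) *m gact N h.
  by rewrite mulmxBr mulmxBl mulmx1 gh'h.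
rewrite conj_expr //; apply: psub_stable (invertible_isVICmor uh) _ => //.
exact: submx_trans (submxMl _ _) he.
Qed.

Lemma perm_two n (i j i' j' : 'I_n) : i != j -> i' != j' ->
  exists s : {perm 'I_n}, s i = i' /\ s j = j'.
Proof.
move=> hij hi'j'.
have h1 : tperm i i' j != i'.
  by apply: contra hij => /eqP h; rewrite -(inj_eq (@perm_inj _ (tperm i i'))) tpermL h.
exists (tperm i i' * tperm (tperm i i' j) j')%g; rewrite !permM tpermL.
by rewrite tpermL (tpermD h1) // eq_sym.
Qed.

Lemma vanish_unipotent (N : pmod R k) m : pvanish N m -> elem_unipotent_from N m.
Proof. by move=> hv n hn i j r _; exists 0%N; rewrite expr0; apply: hv. Qed.

Lemma deriv_unipotent (N : pmod R k) u : functorial N ->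
  elem_unipotent_from (pderiv N) u -> elem_unipotent_from N u.+4.
Proof.
move=> NF hD [|[|p]] // hn i j r hij.
have lt0p : (0 < p)%N by lia.
have lt1p : (1 < p)%N by lia.
pose o0 : 'I_p := Ordinal lt0p; pose o1 : 'I_p := Ordinal lt1p.
have ho : o0 != o1 by rewrite -val_eqE.
have ho' : widen1 o0 != widen1 o1 :> 'I_p.+1 by rewrite ordE.
have uE := unipotent_of_deriv NF ho (hD p.+1 ltac:(lia) _ _ r ho') (hD p ltac:(lia) _ _ r ho).
have [s [hs1 hs2]] := perm_two (i' := widen1 (widen1 o0)) (j' := widen1 (widen1 o1)) hij
  ltac:(by rewrite !ordE).
have -> : elem_mx i j r =
          perm_mx s *m elem_mx (widen1 (widen1 o0)) (widen1 (widen1 o1)) r *m perm_mx (s^-1)%g.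
  by rewrite elem_mx_conj_perm -hs1 -hs2 !permK.
apply: unipotent_mod_conj uE => //; rewrite ?perm_mxV ?perm_mxVK //.
by apply: invertible_elem; rewrite !ordE.
Qed.

Lemma poly_rec_unipotent t : forall (N : pmod R k) m,
  functorial N -> poly_rec t N m -> exists u, elem_unipotent_from N u.
Proof.
elim: t => [|t IH] N m NF /=; first by move=> hv; exists m; apply: vanish_unipotent.
case=> _ /(IH _ _ (functorial_pderiv NF))[u hu].
by exists u.+4; apply: deriv_unipotent.
Qed.

End EventualUnipotence.

Theorem lemma12p2 (R : pzRingType) (k : fieldType)
  (hk : [pchar k] =i pred0)
  (M : VICmod R k) (d : int) (m : nat) (hd : -1 <= d)
  (hM : VICpolynomial M d m) :
  exists u : nat, forall n : nat, (u <= n)%N ->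
    forall (i j : 'I_n) (r : R), i != j -> r != 0 ->
      unipotent (vact M (elem_mx i j r) (@VICzeroC R n)).
Proof.
have [t ht] : exists t, poly_rec t (pmod_of M) m.
  by case: d hM {hd} => [n|[|n]] //= h; [exists n.+1 | exists 0%N].
have [u hu] := poly_rec_unipotent (functorial_pmod_of M) ht.
exists u => n hn i j r hij _; have [e he] := hu n hn i j r hij.
by exists e; apply/eqP; rewrite -submx0.
Qed.
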